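(* In the spectral sequence described in the context, if $r\geq 2$ and $r\not\equiv 4\pmod 9$ and $r\not\equiv 8\pmod 9$, then $d_r=0$. Furthermore, for every $n\geq 0$, $$d_{4+9n}(W_+^{(4+9n)})\subseteq W_-^{(4+9n)},\quad d_{4+9n}(W_-^{(4+9n)})=0,\quad d_{8+9n}(W_+^{(8+9n)})=0,\quad d_{8+9n}(W_-^{(8+9n)})\subseteq W_+^{(8+9n)}.$$
   Context: $k=\mathbb{F}_3$. The spectral sequence is the $b_{10}$-localized $K(\xi_1)$-based Adams spectral sequence converging to $b_{10}^{-1}\operatorname{Ext}_P(\mathbb{F}_3,\mathbb{F}_3)$, trigraded by $(s,t,u)$ (filtration, internal homological degree, internal topological degree) with $d_r:E_r^{s,t,u}\to E_r^{s+r,t-r+1,u}$ and $E_2\cong E[h_{10}]\otimes k[b_{10}^{\pm1}][w_2,w_3,\dots]$, where $h_{10}$ has degree $(0,1,4)$, $b_{10}$ has $(0,2,12)$, $w_n$ has $(1,1,2(3^n+1))$. On $E_2$, $W_+=k[b_{10}^{\pm1}][w_2,w_3,\dots]$ and $W_-=h_{10}W_+$; equivalently $W_+$ (resp. $W_-$) is spanned by the trihomogeneous elements with $s+t$ even (resp. odd). For each $r$, $W_+^{(r)}$ (resp. $W_-^{(r)}$) denotes the span of trihomogeneous elements of $E_r$ with $s+t$ even (resp. odd). *)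

From HB Require Import structures.
From mathcomp Require Import all_boot all_order all_algebra.
Set Implicit Arguments. Unset Strict Implicit. Unset Printing Implicit Defensive.
Import Order.TTheory GRing.Theory Num.Theory.
Local Open Scope ring_scope.

Notation k := 'F_3.

Definition tdeg := (int * int * int)%type.
Definition tdeg_s (x : tdeg) : int := x.1.1.
Definition tdeg_t (x : tdeg) : int := x.1.2.
Definition tdeg_u (x : tdeg) : int := x.2.

Definition dshift (r : nat) (x : tdeg) : tdeg :=
  (tdeg_s x + r%:Z, tdeg_t x - r%:Z + 1, tdeg_u x).

(* s + t even: the tridegree belongs to W_+ ; otherwise to W_-. *)
Definition plus_deg (x : tdeg) : bool := (2 %| tdeg_s x + tdeg_t x)%Z.

(* The page E_r is the direct sum of
   its trihomogeneous parts [page r x]; the differential is recorded by its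
   components [diff r x y : E_r^x -> E_r^y], required to vanish unless
   y = dshift r x.  E_{r+1} is the homology of (E_r, d_r), recorded
   tridegreewise up to isomorphism (equivalently, by dimension):
   dim E_{r+1}^y = dim ker(d_r on E_r^y) - dim im(d_r into E_r^y). *)
Record trigradedSS := TrigradedSS {
  page : nat -> tdeg -> vectType k;
  diff : forall (r : nat) (x y : tdeg), 'Hom(page r x, page r y);
  diff_deg : forall r x y, y <> dshift r x -> diff r x y = 0;
  diff_sq : forall r x y z v, diff r y z (diff r x y v) = 0;
  diff_homology : forall (r : nat) (x y z : tdeg), (2 <= r)%N ->
    y = dshift r x -> z = dshift r y ->
    (\dim (fullv : {vspace page r.+1 y}) + \dim (limg (diff r x y))
      = \dim (lker (diff r y z)))%N
}.

(* Monomials h10^eps b10^kk w_{n_1} ... w_{n_s} of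
   E_2 = E[h10] (x) k[b10^{+-1}][w_2, w_3, ...]: the w-part is encoded as the
   nondecreasing list of its indices (a multiset of integers n >= 2). *)
Definition monomial := (bool * int * seq nat)%type.

Definition monomial_valid (m : monomial) : bool :=
  sorted leq m.2 && all (fun n => 2 <= n)%N m.2.

(* deg h10 = (0,1,4), deg b10 = (0,2,12), deg w_n = (1,1,2(3^n+1)). *)
Definition monomial_deg (m : monomial) : tdeg :=
  let eps : int := (m.1.1 : nat)%:Z in
  let kk := m.1.2 in
  let s : int := (size m.2)%:Z in
  (s, eps + 2 * kk + s,
   4 * eps + 12 * kk + \sum_(n <- m.2) (2 * (3 ^ n + 1))%N%:Z).

(* E_2 is isomorphic, as a trigraded k-vector space, to
   E[h10] (x) k[b10^{+-1}][w_2, w_3, ...]: in every tridegree x, E_2^x has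
   dimension the (finite) number of monomials of tridegree x. *)
Definition E2_is_standard (E : trigradedSS) : Prop :=
  forall x : tdeg, exists L : seq monomial,
    [/\ uniq L,
        (forall m, m \in L <-> (monomial_valid m /\ monomial_deg m = x)) &
        \dim (fullv : {vspace page E 2 x}) = size L].

(** The proof is a degree count on E_2, where the pages are subquotients of
   E_2.  Since 9 divides 3^n for n >= 2, every w_n has tridegree
   (1, 1, 2) modulo 18, so a monomial h10^e b10^k w_(n_1)...w_(n_s) has
   tridegree (s, e + 2k + s, 4e + 12k + 2s) with the last entry taken mod 18.
   Hence e is the parity of s + t, and u - 6t + 4s + 2e is divisible by 18 in
   every tridegree where E_2 is nonzero.  A nonzero d_r goes from such a
   tridegree to another one, flipping e; comparing the two congruences gives
   5r = 2 + 2e (mod 9), i.e. r = 4 (mod 9) when the source is in W_+ and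
   r = 8 (mod 9) when it is in W_-. *)

From HB Require Import structures.
From mathcomp Require Import all_boot all_order all_algebra zify.
Import Order.TTheory GRing.Theory Num.Theory.
Local Open Scope ring_scope.

Section LfunDim0.

Variables (K : fieldType) (U V : vectType K).

Lemma lfun_dim0_dom (f : 'Hom(U, V)) : \dim {:U} = 0%N -> f = 0.
Proof.
move=> /eqP; rewrite dimv_eq0 => /eqP U0; apply/lfunP => u.
by move: (memvf u); rewrite U0 memv0 => /eqP ->; rewrite !linear0.
Qed.

Lemma lfun_dim0_codom (f : 'Hom(U, V)) : \dim {:V} = 0%N -> f = 0.
Proof.
move=> /eqP; rewrite dimv_eq0 => /eqP V0; apply/lfunP => u.
by move: (memvf (f u)); rewrite V0 memv0 => /eqP ->; rewrite lfunE.
Qed.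

End LfunDim0.

Definition admissible_deg (x : tdeg) : bool :=
  (18 %| tdeg_u x - 6 * tdeg_t x + 4 * tdeg_s x + 2 * (~~ plus_deg x : nat)%:Z)%Z.

Lemma plus_deg_dshift r x : plus_deg (dshift r x) = ~~ plus_deg x.
Proof. by case: x => [[s t] u]; rewrite /plus_deg /dshift /tdeg_s /tdeg_t /=; lia. Qed.

Lemma sum_w_degs_mod18 (ns : seq nat) : all (fun n => 2 <= n)%N ns ->
  exists q : int, \sum_(n <- ns) (2 * (3 ^ n + 1))%N%:Z = 2 * (size ns)%:Z + 18 * q.
Proof.
elim: ns => [|n ns IH] /=; first by exists 0; rewrite big_nil; lia.
move=> /andP [n_ge2 /IH [q sum_ns]]; rewrite big_cons sum_ns.
have -> : (3 ^ n = 9 * 3 ^ (n - 2))%N by rewrite -(subnK n_ge2) expnD mulnC subnK.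
by exists (q + (3 ^ (n - 2))%:Z); lia.
Qed.

Lemma admissible_monomial_deg (m : monomial) :
  monomial_valid m -> admissible_deg (monomial_deg m).
Proof.
case: m => [[e kk] ns] /andP [_ /= /sum_w_degs_mod18 [q sum_ns]].
rewrite /admissible_deg /monomial_deg /plus_deg /tdeg_s /tdeg_t /tdeg_u /= sum_ns.
by case: e; lia.
Qed.

Lemma admissible_dshift_mod9 [r x] :
  admissible_deg x -> admissible_deg (dshift r x) ->
  (r %% 9 = if plus_deg x then 4 else 8)%N.
Proof.
rewrite /admissible_deg plus_deg_dshift negbK.
case: x => [[s t] u]; rewrite /plus_deg /dshift /tdeg_s /tdeg_t /tdeg_u /=.
by case: ifP; lia.
Qed.

Section Pages.

Variable E : trigradedSS.

Lemma dim_page_succ_le r y : (2 <= r)%N ->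
  (\dim {:page E r.+1 y} <= \dim {:page E r y})%N.
Proof.
case: y => [[s t] u] r_ge2.
have y_eq : (s, t, u) = dshift r (s - r%:Z, t + r%:Z - 1, u).
  by rewrite /dshift /tdeg_s /tdeg_t /tdeg_u /=; congr (_, _, _); lia.
rewrite (leq_trans _ (dimvS (subvf (lker (diff E r (s, t, u) (dshift r (s, t, u))))))) //.
by rewrite -(diff_homology E r_ge2 y_eq erefl) leq_addr.
Qed.

Lemma dim_page_le_E2 r y : (2 <= r)%N ->
  (\dim {:page E r y} <= \dim {:page E 2 y})%N.
Proof.
elim: r => [|r IH] //; rewrite leq_eqVlt => /orP [/eqP <- //| r_gt2].
exact: leq_trans (dim_page_succ_le _ _ r_gt2) (IH r_gt2).
Qed.

Hypothesis E2_std : E2_is_standard E.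

Lemma admissible_page_deg [r x] : (2 <= r)%N ->
  \dim {:page E r x} != 0%N -> admissible_deg x.
Proof.
move=> r_ge2; apply: contraNT => x_nadm; rewrite -leqn0.
apply: leq_trans (dim_page_le_E2 r x r_ge2) _.
case: (E2_std x) => L [_ memL ->]; case: L memL => [|m L] memL //.
have [m_valid m_deg] := iffLR (memL m) (mem_head m L).
by rewrite -m_deg admissible_monomial_deg in x_nadm.
Qed.

Lemma diff_eq0_mod9 r x y : (2 <= r)%N ->
  (r %% 9 != if plus_deg x then 4 else 8)%N -> diff E r x y = 0.
Proof.
move=> r_ge2 r_mod9; have [->|y_neq] := eqVneq y (dshift r x); last first.
  exact/diff_deg/eqP.
have [x0|x_nz] := eqVneq (\dim {:page E r x}) 0%N; first exact: lfun_dim0_dom.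
have [y0|y_nz] := eqVneq (\dim {:page E r (dshift r x)}) 0%N.
  exact: lfun_dim0_codom.
by rewrite (admissible_dshift_mod9 (admissible_page_deg r_ge2 x_nz)
  (admissible_page_deg r_ge2 y_nz)) eqxx in r_mod9.
Qed.

Lemma limg_diff_eq0_or_flip r x y :
  (limg (diff E r x y) <= 0)%VS \/ plus_deg y = ~~ plus_deg x.
Proof.
have [->|y_neq] := eqVneq y (dshift r x); first by right; rewrite plus_deg_dshift.
by left; rewrite diff_deg ?lim0g //; apply/eqP.
Qed.

End Pages.

Theorem proposition2p3 (E : trigradedSS) (HE2 : E2_is_standard E) :
  (forall r : nat, (2 <= r)%N -> (r %% 9)%N <> 4%N -> (r %% 9)%N <> 8%N ->
     forall x y : tdeg, diff E r x y = 0)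
  /\
  (forall n : nat,
     let r := (4 + 9 * n)%N in
     let r' := (8 + 9 * n)%N in
     (* d_r(W_+^(r)) is contained in W_-^(r) *)
     (forall x y : tdeg, plus_deg x ->
        (limg (diff E r x y) <= 0)%VS \/ ~~ plus_deg y)
     (* d_r(W_-^(r)) = 0 *)
     /\ (forall x y : tdeg, ~~ plus_deg x -> diff E r x y = 0)
     (* d_r'(W_+^(r')) = 0 *)
     /\ (forall x y : tdeg, plus_deg x -> diff E r' x y = 0)
     (* d_r'(W_-^(r')) is contained in W_+^(r') *)
     /\ (forall x y : tdeg, ~~ plus_deg x ->
        (limg (diff E r' x y) <= 0)%VS \/ plus_deg y)).
Proof.
split=> [r r_ge2 r_n4 r_n8 x y|n r r'].
  by apply: diff_eq0_mod9 => //; case: plus_deg; apply/eqP.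
have r_mod9 : (r %% 9 = 4)%N by rewrite /r; lia.
have r'_mod9 : (r' %% 9 = 8)%N by rewrite /r'; lia.
have r_ge2 : (2 <= r)%N by rewrite /r; lia.
have r'_ge2 : (2 <= r')%N by rewrite /r'; lia.
split; [|split; [|split]] => x y x_deg.
- by case: (limg_diff_eq0_or_flip E r x y) => [|->]; [left | right; rewrite x_deg].
- by apply: diff_eq0_mod9; rewrite // r_mod9 (negbTE x_deg).
- by apply: diff_eq0_mod9; rewrite // r'_mod9 x_deg.
- by case: (limg_diff_eq0_or_flip E r' x y) => [|->]; [left | right].
Qed.
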